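(* Let $\mathbf{a}\in\mathbb{C}^n$, $\beta>0$ and $f(\mathbf{z})=\frac12|\mathbf{a}^*\mathbf{z}|^2+\frac{\beta}{2}\|\mathbf{z}\|_4^4$ on $\mathbb{CS}^{n-1}$. Suppose $\mathbf{z},\mathbf{y}\in\mathbb{CS}^{n-1}$ are two consistent local minimizers of $f$ on $\mathbb{CS}^{n-1}$ with $\mathbf{a}^*\mathbf{z}\neq0$ and $\mathbf{a}^*\mathbf{y}\neq0$. Then $|y_k|=|z_k|$ for all $k\in[n]$.
   Context: $\mathbb{CS}^{n-1}=\{\mathbf{z}\in\mathbb{C}^n:\|\mathbf{z}\|_2=1\}$. A stationary point $\mathbf{z}$ (i.e. $(\mathbf{a}^*\mathbf{z})\mathbf{a}+2\beta\,\mathrm{diag}(|z_1|^2,\dots,|z_n|^2)\mathbf{z}=2\lambda\mathbf{z}$ with $2\lambda=|\mathbf{a}^*\mathbf{z}|^2+2\beta\|\mathbf{z}\|_4^4$) is called consistent if $\bar a_kz_k\in\mathbb{R}$ for all $k$ with $a_k\neq0$ and $z_k\in\mathbb{R}$ for all $k$ with $a_k=0$. *)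

From HB Require Import structures.
From mathcomp Require Import all_boot all_order all_algebra.
From mathcomp Require Import complex.
From mathcomp Require Import reals.
Set Implicit Arguments. Unset Strict Implicit. Unset Printing Implicit Defensive.
Import Order.TTheory GRing.Theory Num.Theory.
Local Open Scope ring_scope.
Local Open Scope complex_scope.

Section Defs.
Variables (R : realType) (n : nat).
Implicit Types (a z w : 'I_n -> R[i]).

Definition cabs (x : R[i]) : R := Normc.normc x.

Definition cinner a z : R[i] := \sum_(k < n) (a k)^* * z k.

Definition norm2sq z : R := \sum_(k < n) cabs (z k) ^+ 2.
Definition norm4pow4 z : R := \sum_(k < n) cabs (z k) ^+ 4.

Definition csphere z : Prop := norm2sq z = 1.

Definition fobj a (beta : R) z : R :=
  2^-1 * cabs (cinner a z) ^+ 2 + beta / 2 * norm4pow4 z.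

Definition local_min_on_sphere a (beta : R) z : Prop :=
  csphere z /\
  exists eps : R, 0 < eps /\
    forall w, csphere w -> norm2sq (fun k => w k - z k) < eps ^+ 2 ->
      fobj a beta z <= fobj a beta w.

(* stationary point: (a^* z) a + 2 beta diag(|z_k|^2) z = 2 lambda z,
   with 2 lambda = |a^* z|^2 + 2 beta ||z||_4^4 (componentwise) *)
Definition stationary a (beta : R) z : Prop :=
  forall k : 'I_n,
    cinner a z * a k + (2 * beta * cabs (z k) ^+ 2)%:C * z k =
    (cabs (cinner a z) ^+ 2 + 2 * beta * norm4pow4 z)%:C * z k.

Definition consistent a (beta : R) z : Prop :=
  stationary a beta z /\
  forall k : 'I_n,
    (a k != 0 -> Im ((a k)^* * z k) = 0) /\ (a k = 0 -> Im (z k) = 0).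

End Defs.

(* A local minimizer z of f on the sphere has a positive semidefinite
   Riemannian Hessian on the tangent space.  If z is consistent and
   a^* z <> 0, all entries z_k are nonzero, so every w in C^n can be written
   w_k = u_k z_k; testing the Hessian on the tangent directions
   i Re(u_k) z_k and i Im(u_k) z_k and adding the two inequalities gives
     lambda(z) <= 1/2 |a^* w|^2 + beta sum_k |z_k|^2 |w_k|^2   for unit w,
   where 2 lambda(z) = |a^* z|^2 + 2 beta ||z||_4^4.  Applying this to (z, y)
   and to (y, z) and adding yields beta sum_k (|z_k|^2 - |y_k|^2)^2 <= 0. *)

From Pilot Require Import Defs.
From HB Require Import structures.
From mathcomp Require Import all_boot all_order all_algebra.
From mathcomp Require Import complex.
From mathcomp Require Import reals.
From mathcomp Require Import ring lra.
Set Implicit Arguments. Unset Strict Implicit. Unset Printing Implicit Defensive.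
Import Order.TTheory GRing.Theory Num.Theory.

(* ring_scope is opened last so that x^* is Num.conj, as in Defs; and the
   real and imaginary parts are written complex.Re/complex.Im because the
   unqualified Re/Im denote the R[i]-valued Num.Re/Num.Im. *)
Local Open Scope complex_scope.
Local Open Scope ring_scope.

Lemma quadratic_lt0_near0 (R : realFieldType) (A B C d : R) : A < 0 -> 0 < d ->
  exists2 t, 0 < t < d & A + t * B + t ^+ 2 * C < 0.
Proof.
move=> A_lt0 d_gt0; pose M := `|B| + `|C| + 1.
have M_gt0 : 0 < M by rewrite ltr_pwDr // addr_ge0.
pose t := Num.min (d / 2) (Num.min 1 (- A / (2 * M))).
have t_gt0 : 0 < t by rewrite !lt_min ltr01 !divr_gt0 ?oppr_gt0 ?mulr_gt0.
have t_le1 : t <= 1 by rewrite !ge_min lexx /= orbT.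
have tM : t * (2 * M) <= - A.
  by rewrite -ler_pdivlMr ?mulr_gt0 // !ge_min lexx /= !orbT.
exists t; first by rewrite t_gt0 /= gt_min ltr_pdivrMr //; apply/orP; left; lra.
have tB : t * B <= t * `|B| by apply: ler_wpM2l; [exact: ltW | exact: ler_norm].
have tC : t ^+ 2 * C <= t * `|C|.
  rewrite expr2 -mulrA; apply: ler_wpM2l; first exact: ltW.
  apply: le_trans (ler_norm _) _.
  rewrite normrM (ger0_norm (ltW t_gt0)); exact: ler_piMl (normr_ge0 _) t_le1.
rewrite /M in tM; nra.
Qed.

Lemma eq_of_sum_sqr_le_dot (R : realFieldType) n (r s : 'I_n -> R) :
  \sum_(k < n) r k ^+ 2 + \sum_(k < n) s k ^+ 2 <= 2 * \sum_(k < n) r k * s k ->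
  forall k, r k = s k.
Proof.
move=> le_dot k; apply/eqP; rewrite -subr_eq0 -sqrf_eq0; apply/eqP.
have sum_eq0 : \sum_(j < n) (r j - s j) ^+ 2 = 0.
  apply/eqP; rewrite eq_le sumr_ge0 ?andbT => [|j _]; last exact: sqr_ge0.
  rewrite (eq_bigr (fun j => r j ^+ 2 + s j ^+ 2 - 2 * (r j * s j))) => [|j _].
    by rewrite sumrB big_split /= -mulr_sumr subr_le0.
  by ring.
exact: (psumr_eq0P (fun j _ => sqr_ge0 (r j - s j)) sum_eq0).
Qed.

Section ComplexEntries.
Variable R : realType.
Implicit Types (x y w u : R[i]) (c : R).

Lemma cabs_ge0 x : 0 <= cabs x.
Proof. by case: x => ? ?; exact: sqrtr_ge0. Qed.

Lemma cabs0 : cabs (0 : R[i]) = 0.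
Proof. exact: Normc.normc0. Qed.

Lemma cabs1 : cabs (1 : R[i]) = 1.
Proof. exact: Normc.normc1. Qed.

Lemma cabs_sqr x : cabs x ^+ 2 = complex.Re x ^+ 2 + complex.Im x ^+ 2.
Proof. by case: x => u v; rewrite /cabs sqr_sqrtr // addr_ge0 ?sqr_ge0. Qed.

Lemma cabs_sqr_gt0 x : x != 0 -> 0 < cabs x ^+ 2.
Proof.
move=> x_neq0; rewrite exprn_gt0 // lt0r cabs_ge0 andbT.
by apply: contra_neq x_neq0; apply: Normc.eq0_normc.
Qed.

Lemma cabs_sqr_imag c : cabs (0 +i* c) ^+ 2 = c ^+ 2.
Proof. by rewrite cabs_sqr /= expr0n add0r. Qed.

Lemma cabs_sqrM x y : cabs (x * y) ^+ 2 = cabs x ^+ 2 * cabs y ^+ 2.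
Proof. by rewrite !cabs_sqr; case: x => ? ?; case: y => ? ? /=; ring. Qed.

Lemma cabs_sqrZ c x : cabs (c%:C * x) ^+ 2 = c ^+ 2 * cabs x ^+ 2.
Proof. by rewrite !cabs_sqr; case: x => ? ? /=; ring. Qed.

Lemma Re_realM c x : complex.Re (c%:C * x) = c * complex.Re x.
Proof. by case: x => ? ? /=; ring. Qed.

Lemma Re_conjM x y :
  complex.Re (x^* * y) = complex.Re x * complex.Re y + complex.Im x * complex.Im y.
Proof. by case: x => ? ?; case: y => ? ? /=; ring. Qed.

Lemma Im_conjM x y :
  complex.Im (x^* * y) = complex.Re x * complex.Im y - complex.Im x * complex.Re y.
Proof. by case: x => ? ?; case: y => ? ? /=; ring. Qed.

Lemma Re_conjMxx x : complex.Re (x^* * x) = cabs x ^+ 2.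
Proof. by rewrite Re_conjM cabs_sqr !expr2. Qed.

Lemma Im_conjMxx x : complex.Im (x^* * x) = 0.
Proof. by rewrite Im_conjM mulrC subrr. Qed.

Lemma Re_conjZM c y w : complex.Re ((c%:C * y)^* * w) = c * complex.Re (y^* * w).
Proof. by rewrite !Re_conjM; case: y => ? ? /=; ring. Qed.

Lemma Re_conjDZM x y w c : complex.Re ((x + c%:C * y)^* * w) =
  complex.Re (x^* * w) + c * complex.Re (y^* * w).
Proof. by rewrite !Re_conjM; case: x => ? ?; case: y => ? ? /=; ring. Qed.

Lemma cabs_sqrDZ x y c : cabs (x + c%:C * y) ^+ 2 =
  cabs x ^+ 2 + 2 * c * complex.Re (x^* * y) + c ^+ 2 * cabs y ^+ 2.
Proof. by rewrite !cabs_sqr Re_conjM; case: x => ? ?; case: y => ? ? /=; ring. Qed.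

Lemma cabs_sqrB x y :
  cabs (x - y) ^+ 2 = cabs x ^+ 2 - 2 * complex.Re (y^* * x) + cabs y ^+ 2.
Proof. by rewrite !cabs_sqr Re_conjM; case: x => ? ?; case: y => ? ? /=; ring. Qed.

Lemma Re_conjM_phase x y u : complex.Im (x^* * y) = 0 ->
  complex.Re (x^* * (u * y)) = complex.Re u * complex.Re (x^* * y).
Proof. by rewrite mulrCA; case: (x^* * y) => ? ? /= ->; case: u => ? ? /=; ring. Qed.

Lemma Im_conjM_phase x y u : complex.Im (x^* * y) = 0 ->
  complex.Im (x^* * (u * y)) = complex.Im u * complex.Re (x^* * y).
Proof. by rewrite mulrCA; case: (x^* * y) => ? ? /= ->; case: u => ? ? /=; ring. Qed.

End ComplexEntries.

Section ComplexVectors.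
Variables (R : realType) (n : nat).
Implicit Types (u v w : 'I_n -> R[i]) (c : R).

(* The Euclidean inner product of C^n = R^(2n); v is tangent to the sphere
   at z iff vdot z v = 0. *)
Definition vdot u v : R := complex.Re (cinner u v).

Lemma vdotE u v : vdot u v = \sum_(k < n) complex.Re ((u k)^* * v k).
Proof. by rewrite /vdot /cinner raddf_sum. Qed.

Lemma vdotxx u : vdot u u = norm2sq u.
Proof. by rewrite vdotE; apply: eq_bigr => k _; rewrite Re_conjMxx. Qed.

Lemma norm2sq_ge0 u : 0 <= norm2sq u.
Proof. by apply: sumr_ge0 => k _; rewrite sqr_ge0. Qed.

Lemma norm4pow4E u : norm4pow4 u = \sum_(k < n) (cabs (u k) ^+ 2) ^+ 2.
Proof. by apply: eq_bigr => k _; rewrite -exprM. Qed.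

Lemma cinnerZ u w c : cinner u (fun k => c%:C * w k) = c%:C * cinner u w.
Proof. by rewrite /cinner mulr_sumr; apply: eq_bigr => k _; rewrite mulrCA. Qed.

Lemma cinnerDZ u v w c :
  cinner u (fun k => v k + c%:C * w k) = cinner u v + c%:C * cinner u w.
Proof.
rewrite /cinner mulr_sumr -big_split.
by apply: eq_bigr => k _; rewrite mulrDr mulrCA.
Qed.

Lemma vdotZ u w c : vdot u (fun k => c%:C * w k) = c * vdot u w.
Proof. by rewrite /vdot cinnerZ Re_realM. Qed.

Lemma vdotDZ u v w c :
  vdot u (fun k => v k + c%:C * w k) = vdot u v + c * vdot u w.
Proof. by rewrite /vdot cinnerDZ raddfD /= Re_realM. Qed.

Lemma norm2sqZ c u : norm2sq (fun k => c%:C * u k) = c ^+ 2 * norm2sq u.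
Proof. by rewrite /norm2sq mulr_sumr; apply: eq_bigr => k _; rewrite cabs_sqrZ. Qed.

Lemma norm2sqDZ u v c : norm2sq (fun k => u k + c%:C * v k) =
  norm2sq u + 2 * c * vdot u v + c ^+ 2 * norm2sq v.
Proof.
rewrite /norm2sq vdotE !mulr_sumr -!big_split /=.
by apply: eq_bigr => k _; rewrite cabs_sqrDZ.
Qed.

Lemma norm2sqB u v :
  norm2sq (fun k => u k - v k) = norm2sq u - 2 * vdot v u + norm2sq v.
Proof.
rewrite /norm2sq vdotE mulr_sumr -sumrB -big_split /=.
by apply: eq_bigr => k _; rewrite cabs_sqrB.
Qed.

Lemma norm4pow4Z c u : norm4pow4 (fun k => c%:C * u k) = c ^+ 4 * norm4pow4 u.
Proof.
rewrite /norm4pow4 mulr_sumr; apply: eq_bigr => k _.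
by rewrite -[4%N]/(2 * 2)%N !exprM cabs_sqrZ exprMn.
Qed.

Lemma norm4pow4DZ u v c :
  norm4pow4 (fun k => u k + c%:C * v k) =
  norm4pow4 u + c * (4 * \sum_(k < n) cabs (u k) ^+ 2 * complex.Re ((u k)^* * v k))
  + c ^+ 2 * (4 * \sum_(k < n) complex.Re ((u k)^* * v k) ^+ 2
              + 2 * \sum_(k < n) cabs (u k) ^+ 2 * cabs (v k) ^+ 2)
  + c ^+ 3 * (4 * \sum_(k < n) complex.Re ((u k)^* * v k) * cabs (v k) ^+ 2)
  + c ^+ 4 * norm4pow4 v.
Proof.
rewrite /norm4pow4 !mulr_sumr -!big_split !mulr_sumr -!big_split /=.
apply: eq_bigr => k _.
by rewrite -[4%N]/(2 * 2)%N !exprM cabs_sqrDZ; ring.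
Qed.

End ComplexVectors.

Section Normalization.
Variables (R : realType) (n : nat).
Implicit Types (u v z : 'I_n -> R[i]).

Definition normalize u : 'I_n -> R[i] :=
  fun k => (Num.sqrt (norm2sq u))^-1%:C * u k.

Lemma sqr_inv_sqrt_norm2sq u : norm2sq u != 0 ->
  (Num.sqrt (norm2sq u))^-1 ^+ 2 = (norm2sq u)^-1.
Proof. by move=> u_neq0; rewrite exprVn sqr_sqrtr ?norm2sq_ge0. Qed.

Lemma csphere_normalize u : norm2sq u != 0 -> csphere (normalize u).
Proof.
by move=> u_neq0; rewrite /csphere norm2sqZ sqr_inv_sqrt_norm2sq // mulVf.
Qed.

Lemma norm2sq_normalizeB z u : csphere z -> vdot z u = 1 -> 1 <= norm2sq u ->
  norm2sq (fun k => normalize u k - z k) <= 2 * (norm2sq u - 1).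
Proof.
move=> z_unit zu1 u_ge1.
have u_neq0 : norm2sq u != 0 by rewrite gt_eqF // (lt_le_trans ltr01).
rewrite norm2sqB csphere_normalize // vdotZ zu1 z_unit mulr1.
have s_ge1 : 1 <= Num.sqrt (norm2sq u) by rewrite -sqrtr1 ler_sqrt ?norm2sq_ge0.
have sqr_s : Num.sqrt (norm2sq u) ^+ 2 = norm2sq u by rewrite sqr_sqrtr ?norm2sq_ge0.
set s := Num.sqrt _ in s_ge1 sqr_s *.
have : 2 - s <= s^-1 by rewrite -div1r ler_pdivlMr ?(lt_le_trans ltr01) //; nra.
nra.
Qed.

Lemma fobj_normalize (a : 'I_n -> R[i]) beta u : norm2sq u != 0 ->
  fobj a beta (normalize u) * norm2sq u ^+ 2 =
  2^-1 * cabs (cinner a u) ^+ 2 * norm2sq u + beta / 2 * norm4pow4 u.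
Proof.
move=> u_neq0; rewrite /fobj /normalize cinnerZ cabs_sqrZ norm4pow4Z.
by rewrite -[4%N]/(2 * 2)%N exprM sqr_inv_sqrt_norm2sq //; field.
Qed.

Lemma norm2sq_tangent_line z v (t : R) : csphere z -> vdot z v = 0 ->
  norm2sq (fun k => z k + t%:C * v k) = 1 + t ^+ 2 * norm2sq v.
Proof. by move=> z_unit tangent_v; rewrite norm2sqDZ z_unit tangent_v mulr0 addr0. Qed.

End Normalization.

Section LocalMinimizers.
Variables (R : realType) (n : nat) (a : 'I_n -> R[i]) (beta : R).
Implicit Types (z v w y : 'I_n -> R[i]).

Definition multiplier z : R := 2^-1 * cabs (cinner a z) ^+ 2 + beta * norm4pow4 z.

Definition first_variation z v : R :=
  complex.Re ((cinner a z)^* * cinner a v)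
  + 2 * beta * \sum_(k < n) cabs (z k) ^+ 2 * complex.Re ((z k)^* * v k).

(* Half the Riemannian Hessian of f at z, as a quadratic form in the tangent
   vector v. *)
Definition hessian_form z v : R :=
  2^-1 * cabs (cinner a v) ^+ 2
  + \sum_(k < n) (beta * cabs (z k) ^+ 2 - multiplier z) * cabs (v k) ^+ 2
  + 2 * beta * \sum_(k < n) complex.Re ((z k)^* * v k) ^+ 2.

Lemma stationary_first_variation z v :
  stationary a beta z -> vdot z v = 0 -> first_variation z v = 0.
Proof.
move=> stat_z tangent_v.
have stat_k k : complex.Re ((cinner a z * a k)^* * v k)
    + 2 * beta * cabs (z k) ^+ 2 * complex.Re ((z k)^* * v k)
    = (cabs (cinner a z) ^+ 2 + 2 * beta * norm4pow4 z) * complex.Re ((z k)^* * v k).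
  have := congr1 (fun x => complex.Re (x^* * v k)) (stat_z k).
  by rewrite /= Re_conjDZM Re_conjZM.
rewrite /first_variation.
have -> : complex.Re ((cinner a z)^* * cinner a v) =
          \sum_(k < n) complex.Re ((cinner a z * a k)^* * v k).
  rewrite /cinner mulr_sumr raddf_sum; apply: eq_bigr => k _.
  by rewrite rmorphM mulrA.
rewrite mulr_sumr -big_split /=.
under eq_bigr do rewrite mulrA stat_k.
by rewrite -mulr_sumr -vdotE tangent_v mulr0.
Qed.

(* Multiplying by ||z + t v||^4 = (1 + t^2 ||v||^2)^2 makes the increment of f
   along the retraction a polynomial in t. *)
Lemma fobj_retraction_expansion z v : csphere z -> vdot z v = 0 ->
  exists c3 c4 : R, forall t : R,
    (fobj a beta (normalize (fun k => z k + t%:C * v k)) - fobj a beta z)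
      * (1 + t ^+ 2 * norm2sq v) ^+ 2
    = t * first_variation z v + t ^+ 2 * (hessian_form z v + t * c3 + t ^+ 2 * c4).
Proof.
move=> z_unit tangent_v.
set p := cinner a z; set q := cinner a v; set V := norm2sq v.
set mixed := \sum_(k < n) cabs (z k) ^+ 2 * cabs (v k) ^+ 2.
set radial := \sum_(k < n) complex.Re ((z k)^* * v k) ^+ 2.
set cubic := \sum_(k < n) complex.Re ((z k)^* * v k) * cabs (v k) ^+ 2.
have hessianE : hessian_form z v =
    2^-1 * cabs q ^+ 2 + beta * mixed - multiplier z * V + 2 * beta * radial.
  rewrite /hessian_form (eq_bigr (fun k => beta * (cabs (z k) ^+ 2 * cabs (v k) ^+ 2)
      - multiplier z * cabs (v k) ^+ 2)) => [|k _]; last by ring.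
  by rewrite sumrB -!mulr_sumr addrA.
exists (complex.Re (p^* * q) * V + 2 * beta * cubic).
exists (2^-1 * cabs q ^+ 2 * V + beta / 2 * norm4pow4 v
        - (2^-1 * cabs p ^+ 2 + beta / 2 * norm4pow4 z) * V ^+ 2).
move=> t; have N_eq := norm2sq_tangent_line t z_unit tangent_v; rewrite -/V in N_eq.
have N_neq0 : 1 + t ^+ 2 * V != 0.
  by rewrite gt_eqF // ltr_pwDl // mulr_ge0 ?sqr_ge0 ?norm2sq_ge0.
rewrite mulrBl -{1}N_eq fobj_normalize ?N_eq // cinnerDZ cabs_sqrDZ norm4pow4DZ.
rewrite hessianE /first_variation /multiplier /fobj -/p -/q -/mixed -/radial -/cubic.
by field.
Qed.

Lemma local_min_hessian_ge0 z v : local_min_on_sphere a beta z ->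
  stationary a beta z -> vdot z v = 0 -> 0 <= hessian_form z v.
Proof.
move=> [z_unit [eps [eps_gt0 z_min]]] stat_z tangent_v.
rewrite leNgt; apply/negP => hessian_lt0.
have [c3 [c4 expansion]] := fobj_retraction_expansion z_unit tangent_v.
have V_ge0 := norm2sq_ge0 v; set V := norm2sq v in V_ge0 expansion.
have [|t /andP[t_gt0 t_lt] poly_lt0] :=
  quadratic_lt0_near0 c3 c4 hessian_lt0 (d := eps / (V + 1)).
  by rewrite divr_gt0 // ltr_pwDr.
set u := fun k => z k + t%:C * v k.
have N_eq : norm2sq u = 1 + t ^+ 2 * V := norm2sq_tangent_line t z_unit tangent_v.
have N_ge1 : 1 <= norm2sq u by rewrite N_eq lerDl mulr_ge0 ?sqr_ge0.
have N_neq0 : norm2sq u != 0 by rewrite gt_eqF // (lt_le_trans ltr01).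
have w_near : norm2sq (fun k => normalize u k - z k) < eps ^+ 2.
  have zu1 : vdot z u = 1 by rewrite vdotDZ vdotxx z_unit tangent_v mulr0 addr0.
  apply: le_lt_trans (norm2sq_normalizeB z_unit zu1 N_ge1) _.
  move: t_lt; rewrite N_eq ltr_pdivlMr ?ltr_pwDr // => t_lt.
  have : (t * (V + 1)) ^+ 2 < eps ^+ 2 by rewrite ltr_pXn2r // ?nnegrE; nra.
  nra.
have := z_min _ (csphere_normalize N_neq0) w_near.
rewrite -subr_ge0 -(pmulr_lge0 _ (exprn_gt0 2 (lt_le_trans ltr01 N_ge1))) N_eq.
rewrite expansion stationary_first_variation // mulr0 add0r.
by rewrite pmulr_rge0 ?exprn_gt0 // leNgt poly_lt0.
Qed.

Lemma multiplier_gt0 z : 0 <= beta -> cinner a z != 0 -> 0 < multiplier z.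
Proof.
move=> beta_ge0 p_neq0; have := cabs_sqr_gt0 p_neq0.
have : 0 <= beta * norm4pow4 z.
  by rewrite mulr_ge0 // sumr_ge0 // => k _; rewrite exprn_ge0 ?cabs_ge0.
rewrite /multiplier; lra.
Qed.

(* If z_k = 0, stationarity forces a_k = 0, and the Hessian in the tangent
   direction e_k is then - multiplier z < 0. *)
Lemma local_min_entries_neq0 z : 0 <= beta -> local_min_on_sphere a beta z ->
  stationary a beta z -> cinner a z != 0 -> forall k, z k != 0.
Proof.
move=> beta_ge0 z_min stat_z p_neq0 k; apply/negP => /eqP zk0.
have ak0 : a k = 0.
  move: (stat_z k); rewrite zk0 !mulr0 addr0 => /eqP.
  by rewrite mulf_eq0 (negPf p_neq0) => /eqP.
pose e j : R[i] := if j == k then 1 else 0.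
have conjM_e (x : 'I_n -> R[i]) : x k = 0 -> forall j, (x j)^* * e j = 0.
  move=> xk0 j; rewrite /e.
  by case: eqVneq => [->|_]; rewrite ?xk0 ?mulr0 // rmorph0 mul0r.
have cabs_e j : cabs (e j) = if j == k then 1 else 0.
  by rewrite /e; case: eqP => _; rewrite ?cabs1 ?cabs0.
have tangent_e : vdot z e = 0 by rewrite vdotE big1 // => j _; rewrite conjM_e.
have := local_min_hessian_ge0 z_min stat_z tangent_e.
rewrite /hessian_form [cinner a e]big1 => [|j _]; last exact: conjM_e.
rewrite [X in 2 * beta * X]big1 => [|j _]; last by rewrite conjM_e // expr0n.
rewrite (bigD1 k) // big1 => [|j /negPf jk]; last by rewrite cabs_e jk expr0n mulr0.
rewrite zk0 cabs_e eqxx !cabs0.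
have := multiplier_gt0 beta_ge0 p_neq0; rewrite /=; lra.
Qed.

Lemma consistent_Im_conjM z : consistent a beta z ->
  forall k, complex.Im ((a k)^* * z k) = 0.
Proof.
move=> [_ consistent_z] k; have [Im_a_neq0 _] := consistent_z k.
have [->|/Im_a_neq0 Im_eq0] := eqVneq (a k) 0; first by rewrite rmorph0 mul0r.
by apply: (@complexI R); rewrite complexIm Im_eq0.
Qed.

(* v_k = i alpha_k z_k is tangent, and since every (a_k)^* z_k is real,
   a^* v is purely imaginary. *)
Lemma hessian_phase_rotation_ge0 z (alpha : 'I_n -> R) :
  local_min_on_sphere a beta z -> stationary a beta z ->
  (forall k, complex.Im ((a k)^* * z k) = 0) ->
  0 <= 2^-1 * (\sum_(k < n) alpha k * complex.Re ((a k)^* * z k)) ^+ 2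
       + \sum_(k < n) (beta * cabs (z k) ^+ 2 - multiplier z)
                      * (alpha k ^+ 2 * cabs (z k) ^+ 2).
Proof.
move=> z_min stat_z phase_z; pose v k := (0 +i* alpha k) * z k.
have zv k : complex.Re ((z k)^* * v k) = 0.
  by rewrite Re_conjM_phase ?Im_conjMxx // mul0r.
have tangent_v : vdot z v = 0 by rewrite vdotE big1.
have := local_min_hessian_ge0 z_min stat_z tangent_v.
rewrite /hessian_form cabs_sqr /cinner raddf_sum [X in _ ^+ 2 + X ^+ 2]raddf_sum /=.
rewrite big1 => [|k _]; last by rewrite Re_conjM_phase // mul0r.
rewrite (eq_bigr (fun k => alpha k * complex.Re ((a k)^* * z k))) => [|k _]; last first.
  exact: Im_conjM_phase.
rewrite [X in 2 * beta * X]big1 => [|k _]; last by rewrite zv expr0n.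
under [X in _ + X + _]eq_bigr do rewrite cabs_sqrM cabs_sqr_imag.
by rewrite expr0n add0r mulr0 addr0.
Qed.

(* Writing w_k = u_k z_k, this is the sum of hessian_phase_rotation_ge0 for
   alpha = Re u and alpha = Im u. *)
Lemma consistent_hessian_ge0 z w : 0 <= beta -> local_min_on_sphere a beta z ->
  consistent a beta z -> cinner a z != 0 ->
  0 <= 2^-1 * cabs (cinner a w) ^+ 2
       + \sum_(k < n) (beta * cabs (z k) ^+ 2 - multiplier z) * cabs (w k) ^+ 2.
Proof.
move=> beta_ge0 z_min consistent_z p_neq0.
have stat_z := consistent_z.1; have phase_z := consistent_Im_conjM consistent_z.
pose u k := w k / z k.
have w_eq k : w k = u k * z k by rewrite divfK // local_min_entries_neq0.
have rotation_Re :=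
  hessian_phase_rotation_ge0 (fun k => complex.Re (u k)) z_min stat_z phase_z.
have rotation_Im :=
  hessian_phase_rotation_ge0 (fun k => complex.Im (u k)) z_min stat_z phase_z.
rewrite cabs_sqr /cinner raddf_sum [X in _ ^+ 2 + X ^+ 2]raddf_sum /=.
under eq_bigr do rewrite w_eq Re_conjM_phase //.
under [X in _ ^+ 2 + X ^+ 2]eq_bigr do rewrite w_eq Im_conjM_phase //.
have split_w k : (beta * cabs (z k) ^+ 2 - multiplier z) * cabs (w k) ^+ 2 =
    (beta * cabs (z k) ^+ 2 - multiplier z) * (complex.Re (u k) ^+ 2 * cabs (z k) ^+ 2)
    + (beta * cabs (z k) ^+ 2 - multiplier z) * (complex.Im (u k) ^+ 2 * cabs (z k) ^+ 2).
  by rewrite w_eq cabs_sqrM [cabs (u k) ^+ 2]cabs_sqr; ring.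
rewrite (eq_bigr _ (fun k _ => split_w k)) big_split /=; lra.
Qed.

Lemma multiplier_le_mixed z y : 0 <= beta -> local_min_on_sphere a beta z ->
  consistent a beta z -> cinner a z != 0 -> csphere y ->
  multiplier z <= 2^-1 * cabs (cinner a y) ^+ 2
                  + beta * \sum_(k < n) cabs (z k) ^+ 2 * cabs (y k) ^+ 2.
Proof.
move=> beta_ge0 z_min consistent_z p_neq0 y_unit.
have := consistent_hessian_ge0 y beta_ge0 z_min consistent_z p_neq0.
rewrite (eq_bigr (fun k => beta * (cabs (z k) ^+ 2 * cabs (y k) ^+ 2)
    - multiplier z * cabs (y k) ^+ 2)) => [|k _]; last by ring.
rewrite sumrB -!mulr_sumr -/(norm2sq y) y_unit; lra.
Qed.

End LocalMinimizers.

Theorem theorem10 (R : realType) (n : nat) (a : 'I_n -> R[i]) (beta : R)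
  (z y : 'I_n -> R[i]) :
  0 < beta ->
  csphere z -> csphere y ->
  local_min_on_sphere a beta z -> local_min_on_sphere a beta y ->
  consistent a beta z -> consistent a beta y ->
  cinner a z != 0 -> cinner a y != 0 ->
  forall k : 'I_n, cabs (y k) = cabs (z k).
Proof.
move=> beta_gt0 z_unit y_unit z_min y_min consistent_z consistent_y pz_neq0 py_neq0.
have beta_ge0 := ltW beta_gt0.
have le_z := multiplier_le_mixed beta_ge0 z_min consistent_z pz_neq0 y_unit.
have le_y := multiplier_le_mixed beta_ge0 y_min consistent_y py_neq0 z_unit.
rewrite /multiplier !norm4pow4E in le_z le_y.
have mixed_sym : \sum_(k < n) cabs (y k) ^+ 2 * cabs (z k) ^+ 2 =
                 \sum_(k < n) cabs (z k) ^+ 2 * cabs (y k) ^+ 2.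
  by apply: eq_bigr => j _; rewrite mulrC.
have sqr_eq := @eq_of_sum_sqr_le_dot R n (fun k => cabs (z k) ^+ 2)
  (fun k => cabs (y k) ^+ 2).
move=> k; apply/eqP; rewrite -(eqrXn2 (n := 2)) ?cabs_ge0 // sqr_eq //.
rewrite -(ler_pM2l beta_gt0); rewrite mixed_sym in le_y; lra.
Qed.
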